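(* Let $\rho$ be an $N\times N$ density matrix with eigenvalue vector $\lambda$ (nonnegative entries summing to one). Let $\{|i\rangle\}_{i=1}^N$ and $\{|a_i\rangle\}_{i=1}^N$ be orthonormal bases of $\mathbb{C}^N$, and let $p_i=\langle i|\rho|i\rangle$, $q_i=\langle a_i|\rho|a_i\rangle$. Let $1\le m,n\le N$ and let $A$ be the $n\times m$ matrix with entries $A_{ij}=\langle a_i|j\rangle$ ($1\le i\le n$, $1\le j\le m$). Define $\mu\in\mathbb{R}^{m+n}$ by $\mu=(1,1,\dots,1)+\big(\sigma(A)\oplus(-\sigma(A))\big)$, where $\sigma(A)$ is the vector of singular values of $A$, $\oplus$ denotes concatenation, and $\sigma(A)\oplus(-\sigma(A))$ is extended by zeros to length $m+n$. Then $$p_1+\dots+p_m+q_1+\dots+q_n\le\lambda^{\downarrow}\cdot\mu^{\downarrow},$$ where $x^\downarrow$ denotes the nonincreasing rearrangement of $x$, $\cdot$ is the standard scalar product, and the shorter of the two vectors is padded with zeros. *)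

From HB Require Import structures.
From mathcomp Require Import all_boot all_order all_algebra.
Set Implicit Arguments. Unset Strict Implicit. Unset Printing Implicit Defensive.
Import Order.TTheory GRing.Theory Num.Theory.
Local Open Scope ring_scope.

Section Defs.
Variable C : numClosedFieldType.

(* Kets are represented by their coordinate vectors, written as row vectors.
   braket u M v = <u| M |v> = sum_{j,k} conj(u_j) M_{jk} v_k. *)
Definition braket N (u : 'rV[C]_N) (M : 'M[C]_N) (v : 'rV[C]_N) : C :=
  ((map_mx Num.conj u) *m M *m v^T) 0 0.

Definition ip N (u v : 'rV[C]_N) : C := ((map_mx Num.conj u) *m v^T) 0 0.

Definition adj_mx m n (A : 'M[C]_(m, n)) : 'M[C]_(n, m) := (map_mx Num.conj A)^T.

Definition density_matrix N (rho : 'M[C]_N) : Prop :=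
  [/\ adj_mx rho = rho, forall v : 'rV[C]_N, 0 <= braket v rho v & \tr rho = 1].

(* the rows of E form an orthonormal basis of C^N *)
Definition orthonormal_basis N (E : 'M[C]_N) : Prop := E *m adj_mx E = 1%:M.

Definition eigenvalue_vector N (M : 'M[C]_N) (lam : 'I_N -> C) : Prop :=
  char_poly M = \prod_(i < N) ('X - (lam i)%:P).

(* sig lists the singular values of A (n x m): the square roots of the
   minn m n (largest) eigenvalues of A^* A, the other m - minn m n being 0 *)
Definition singular_values n m (A : 'M[C]_(n, m)) (sig : 'I_(minn m n) -> C) : Prop :=
  (forall k, 0 <= sig k) /\
  char_poly (adj_mx A *m A) = 'X^(m - minn m n) * \prod_(k < minn m n) ('X - (sig k ^+ 2)%:P).

Definition decr (s : seq C) : seq C := sort (fun x y => y <= x) s.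

Definition sdot (s t : seq C) : C :=
  \sum_(i < size s + size t) nth 0 s i * nth 0 t i.

End Defs.

From HB Require Import structures.
From mathcomp Require Import all_boot all_order all_algebra.
From mathcomp Require Import perm ring zify.
Import Order.TTheory GRing.Theory Num.Theory.
Local Open Scope ring_scope.
Set Implicit Arguments.
Unset Strict Implicit.
Unset Printing Implicit Defensive.

(* Stack the bras of the first m vectors |j> and of the first n vectors |a_i>
   into an (m + n) x N matrix W.  The left-hand side is tr(W rho W^H), and the
   Gram matrix W W^H = [[1, A^H], [A, 1]] has spectrum mu.  Writing
   rho = V^H diag(lambda) V and W W^H = X^H diag(mu) X, the rows of
   T = X W V^H are orthogonal with squared norms mu_i, so
   tr(W rho W^H) = sum_(i,k) mu_i S_ik lambda_k with S_ik = |T_ik|^2 / mu_i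
   doubly substochastic.  By Abel summation such a pairing of two nonnegative
   vectors is at most the scalar product of their nonincreasing
   rearrangements. *)

Section DoublySubstochastic.
Variable R : numDomainType.

Definition doubly_substochastic M N (S : 'I_M -> 'I_N -> R) :=
  [/\ forall i k, 0 <= S i k, forall i, \sum_k S i k <= 1
    & forall k, \sum_i S i k <= 1].

Lemma ler_sum_weighted_prefix N t (w : 'I_N -> R) (b : nat -> R) :
  (forall k, 0 <= w k <= 1) -> \sum_k w k <= t%:R ->
  (forall i j, (i <= j)%N -> b j <= b i) -> (forall i, 0 <= b i) ->
  \sum_(k < N) w k * b k <= \sum_(k < t) b k.
Proof.
move=> hw hsw hdec hb0.
have [htN|hNt] := leqP t N; last first.
  apply: (@le_trans _ _ (\sum_(k < N) b k)).
    by apply: ler_sum => k _; have /andP[_ w1] := hw k; exact: ler_piMl.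
  rewrite (big_ord_widen t b (ltnW hNt)) big_mkcond /=.
  by apply: ler_sum => k _; case: ifP.
(* With c = b t, w_k b_k <= w_k c + [k < t] (b_k - c), and the weights
   contribute at most t c in total. *)
set c := b t.
have hc0 : 0 <= c := hb0 t.
have hsplit : \sum_(k < N) w k * b k <=
    \sum_(k < N) (w k * c + (if (k < t)%N then b k - c else 0)).
  apply: ler_sum => k _; have /andP[w0 w1] := hw k.
  case: ifP => hkt.
    rewrite -subr_ge0.
    have -> : w k * c + (b k - c) - w k * b k = (1 - w k) * (b k - c) by ring.
    by apply: mulr_ge0; rewrite subr_ge0 //; apply: hdec; apply: ltnW.
  by rewrite addr0; apply: ler_wpM2l => //; apply: hdec; rewrite leqNgt hkt.
apply: (le_trans hsplit); rewrite big_split /= -big_mkcond /= -mulr_suml.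
rewrite -(big_ord_widen N (fun k => b k - c) htN) sumrB sumr_const card_ord.
have hwc : (\sum_k w k) * c <= c *+ t.
  by rewrite -mulr_natr [_ * c]mulrC; exact: (ler_wpM2l hc0 hsw).
by apply: le_trans (lerD hwc (lexx _)) _; rewrite addrC subrK.
Qed.

Lemma sum_by_parts (a d : nat -> R) n :
  \sum_(i < n) a i * d i =
  \sum_(i < n) (a i - a i.+1) * \sum_(j < i.+1) d j + a n * \sum_(j < n) d j.
Proof.
elim: n => [|n IH]; first by rewrite !big_ord0 mulr0 addr0.
by rewrite big_ord_recr /= IH big_ord_recr /= (big_ord_recr n) /=; ring.
Qed.

Lemma ler_sum_mul_nonincr M (a x y : nat -> R) :
  (forall i j, (i <= j)%N -> a j <= a i) -> (forall i, 0 <= a i) ->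
  (forall t, (t <= M)%N -> \sum_(i < t) x i <= \sum_(i < t) y i) ->
  \sum_(i < M) a i * x i <= \sum_(i < M) a i * y i.
Proof.
move=> hdec ha hxy; rewrite -subr_ge0 -sumrB.
under eq_bigr do rewrite -mulrBr.
rewrite (sum_by_parts a (fun i => y i - x i)); apply: addr_ge0.
  apply: sumr_ge0 => i _; apply: mulr_ge0; first by rewrite subr_ge0 hdec.
  by rewrite sumrB subr_ge0; apply: hxy.
by apply: mulr_ge0 => //; rewrite sumrB subr_ge0; apply: hxy.
Qed.

Lemma doubly_substochastic_le_nonincr M N (S : 'I_M -> 'I_N -> R)
    (a b : nat -> R) :
  (forall i j, (i <= j)%N -> a j <= a i) -> (forall i, 0 <= a i) ->
  (forall i j, (i <= j)%N -> b j <= b i) -> (forall i, 0 <= b i) ->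
  doubly_substochastic S ->
  \sum_(i < M) \sum_(k < N) a i * S i k * b k <= \sum_(i < M + N) a i * b i.
Proof.
move=> hadec ha0 hbdec hb0 [hS hrow hcol].
pose x i := oapp (fun i : 'I_M => \sum_k S i k * b k) 0 (insub i).
have hx (i : 'I_M) : x i = \sum_k S i k * b k by rewrite /x valK.
have -> : \sum_(i < M) \sum_(k < N) a i * S i k * b k = \sum_(i < M) a i * x i.
  apply: eq_bigr => i _; rewrite hx mulr_sumr.
  by apply: eq_bigr => k _; rewrite mulrA.
apply: (@le_trans _ _ (\sum_(i < M) a i * b i)).
  apply: ler_sum_mul_nonincr => // t ht.
  rewrite (big_ord_widen M x ht).
  under eq_bigr do rewrite hx.
  rewrite exchange_big /=.
  under eq_bigr do rewrite -mulr_suml.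
  apply: ler_sum_weighted_prefix => //.
    move=> k; rewrite sumr_ge0 //=; apply: le_trans (hcol k).
    rewrite [X in _ <= X](bigID (fun i : 'I_M => (i < t)%N)) /= lerDl.
    exact: sumr_ge0.
  rewrite exchange_big /=.
  apply: (@le_trans _ _ (\sum_(i < M | (i < t)%N) 1)); first exact: ler_sum.
  by rewrite -(big_ord_widen M (fun _ => (1 : R)) ht) sumr_const card_ord.
rewrite (big_ord_widen (M + N) (fun i => a i * b i) (leq_addr N M)) big_mkcond.
by apply: ler_sum => i _; case: ifP => // _; apply: mulr_ge0.
Qed.

Lemma nth_perm_eq_map_enum M (f : 'I_M -> R) (s : seq R) :
  perm_eq s [seq f i | i <- enum 'I_M] ->
  exists p : 'S_M, forall i : 'I_M, nth 0 s i = f (p i).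
Proof.
move=> hs; have : perm_eq s [tuple f i | i < M].
  by rewrite (_ : val [tuple f i | i < M] = map f (val (ord_tuple M))) // val_ord_tuple.
case/tuple_permP => p hp; exists p => i.
by rewrite hp -(tnth_nth 0) !tnth_mktuple.
Qed.

Lemma nth_sorted_ge (s : seq R) :
  sorted (fun x y => y <= x) s -> all (fun x => 0 <= x) s ->
  (forall i j, (i <= j)%N -> nth 0 s j <= nth 0 s i) /\
  (forall i, 0 <= nth 0 s i).
Proof.
move=> hs /allP hs0.
have nth_ge0 i : 0 <= nth 0 s i.
  by case: (ltnP i (size s)) => hi; [exact/hs0/mem_nth | rewrite nth_default].
split=> // i j hij; case: (ltnP j (size s)) => hj; last by rewrite nth_default.
have tr : transitive (fun x y : R => y <= x) by move=> y x z h1 h2; exact: le_trans h2 h1.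
apply: (sorted_leq_nth tr (fun x => lexx x) 0 hs) => //.
by rewrite inE (leq_ltn_trans hij hj).
Qed.

End DoublySubstochastic.

Section Rearrangement.
Variable C : numClosedFieldType.

Lemma sdotC (s t : seq C) : sdot s t = sdot t s.
Proof. by rewrite /sdot addnC; apply: eq_bigr => i _; exact: mulrC. Qed.

Lemma decr_sorted_ge0 (s : seq C) :
  all (fun x => 0 <= x) s -> sorted (fun x y => y <= x) (decr s).
Proof.
move=> hs; apply: (@sort_sorted_in _ Num.real).
  by move=> x y hx hy; rewrite orbC; apply: real_leVge.
by apply: sub_all hs => x; exact: ger0_real.
Qed.

Lemma doubly_substochastic_le_sdot M N (a : 'I_M -> C) (b : 'I_N -> C)
    (S : 'I_M -> 'I_N -> C) (sa sb : seq C) :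
  (forall i, 0 <= a i) -> (forall k, 0 <= b k) -> doubly_substochastic S ->
  perm_eq sa [seq a i | i <- enum 'I_M] -> perm_eq sb [seq b k | k <- enum 'I_N] ->
  \sum_i \sum_k a i * S i k * b k <= sdot (decr sa) (decr sb).
Proof.
move=> ha hb [hS hrow hcol] hsa hsb.
have hpa : perm_eq (decr sa) [seq a i | i <- enum 'I_M].
  by apply: perm_trans hsa; rewrite perm_sort.
have hpb : perm_eq (decr sb) [seq b k | k <- enum 'I_N].
  by apply: perm_trans hsb; rewrite perm_sort.
have all_ge0 M' (f : 'I_M' -> C) s : (forall i, 0 <= f i) ->
    perm_eq s [seq f i | i <- enum 'I_M'] -> all (fun x => 0 <= x) s.
  by move=> hf hs; rewrite (perm_all _ hs); apply/allP => _ /mapP[i _ ->].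
have [hadec ha0] := nth_sorted_ge
  (decr_sorted_ge0 (all_ge0 _ _ _ ha hsa)) (all_ge0 _ _ _ ha hpa).
have [hbdec hb0] := nth_sorted_ge
  (decr_sorted_ge0 (all_ge0 _ _ _ hb hsb)) (all_ge0 _ _ _ hb hpb).
have [pa ea] := nth_perm_eq_map_enum hpa; have [pb eb] := nth_perm_eq_map_enum hpb.
rewrite (reindex_inj (@perm_inj _ pa)) /=.
under eq_bigr do rewrite (reindex_inj (@perm_inj _ pb)) /=.
under eq_bigr do under eq_bigr do rewrite -ea -eb.
rewrite /sdot (perm_size hpa) (perm_size hpb) !size_map -!enumT !size_enum_ord.
apply: (doubly_substochastic_le_nonincr (S := fun i k => S (pa i) (pb k))) => //.
split=> // [i|k].
  by have := hrow (pa i); rewrite (reindex_inj (@perm_inj _ pb)).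
by have := hcol (pb k); rewrite (reindex_inj (@perm_inj _ pa)).
Qed.

End Rearrangement.

Section Adjoint.
Variable C : numClosedFieldType.

Lemma adj_mxK m n (A : 'M[C]_(m, n)) : adj_mx (adj_mx A) = A.
Proof. by apply/matrixP => i j; rewrite /adj_mx !mxE conjCK. Qed.

Lemma adj_mxM m n p (A : 'M[C]_(m, n)) (B : 'M[C]_(n, p)) :
  adj_mx (A *m B) = adj_mx B *m adj_mx A.
Proof. by rewrite /adj_mx map_mxM trmx_mul. Qed.

Lemma adj_mxE m n (A : 'M[C]_(m, n)) : adj_mx A = (A ^t Num.conj)%sesqui.
Proof. by rewrite /adj_mx map_trmx. Qed.

Lemma unitary_mulmx_adj n (X : 'M[C]_n) : X \is unitarymx -> X *m adj_mx X = 1%:M.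
Proof. by move/unitarymxP; rewrite adj_mxE. Qed.

Lemma unitary_adj_mulmx n (X : 'M[C]_n) : X \is unitarymx -> adj_mx X *m X = 1%:M.
Proof.
move=> hX; rewrite adj_mxE -invmx_unitary //; apply: mulVmx.
exact: unitarymx_unit.
Qed.

Lemma normal_spectral_decomp n (A : 'M[C]_n) : A *m adj_mx A = adj_mx A *m A ->
  A = adj_mx (spectralmx A) *m diag_mx (spectral_diag A) *m spectralmx A.
Proof.
move=> h; have hn : A \is normalmx by apply/normalmxP; rewrite -!adj_mxE.
by rewrite adj_mxE -invmx_unitary ?spectral_unitarymx //; apply/orthomx_spectralP.
Qed.

Lemma char_poly_unitary_conj n (P D : 'M[C]_n) : P \is unitarymx ->
  char_poly (adj_mx P *m D *m P) = char_poly D.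
Proof.
move=> hP.
have e : char_poly_mx (adj_mx P *m D *m P) =
    map_mx polyC (adj_mx P) *m char_poly_mx D *m map_mx polyC P.
  rewrite /char_poly_mx mulmxBr mulmxBl -!map_mxM mul_mx_scalar -scalemxAl.
  by rewrite -map_mxM unitary_adj_mulmx // map_mx1 scalemx1.
rewrite /char_poly e !det_mulmx !det_map_mx mulrC mulrA -rmorphM -det_mulmx.
by rewrite unitary_mulmx_adj // det1 rmorph1 mul1r.
Qed.

Lemma perm_eq_spectral_diag n (A : 'M[C]_n) (s : seq C) :
  A *m adj_mx A = adj_mx A *m A ->
  char_poly A = \prod_(x <- s) ('X - x%:P) ->
  perm_eq s [seq spectral_diag A 0 i | i <- enum 'I_n].
Proof.
move=> hn hc; apply: prod_XsubC_eq; rewrite -hc.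
rewrite {1}(normal_spectral_decomp hn) char_poly_unitary_conj ?spectral_unitarymx //.
rewrite char_poly_trig ?diag_mx_is_trig // big_map big_enum /=.
by apply: eq_bigr => i _; rewrite mxE eqxx mulr1n.
Qed.

Lemma hermitian_psd_spectral_diag_ge0 n (rho : 'M[C]_n) :
  adj_mx rho = rho -> (forall v, 0 <= braket v rho v) ->
  forall k, 0 <= spectral_diag rho 0 k.
Proof.
move=> hH hpsd k; set V := spectralmx rho.
have hV : V \is unitarymx := spectral_unitarymx rho.
have hVrho : V *m rho *m adj_mx V = diag_mx (spectral_diag rho).
  rewrite {1}(normal_spectral_decomp (A := rho)) ?hH // !mulmxA.
  by rewrite unitary_mulmx_adj // mul1mx -mulmxA unitary_mulmx_adj // mulmx1.
have := congr1 (fun M : 'M[C]_n => M k k) hVrho.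
rewrite /= [in RHS]mxE eqxx mulr1n => <-.
have -> : (V *m rho *m adj_mx V) k k = braket (\row_l (V k l)^*) rho (\row_l (V k l)^*).
  rewrite /braket !mxE; apply: eq_bigr => j _; rewrite !mxE.
  by congr (_ * _); apply: eq_bigr => l _; rewrite !mxE conjCK.
exact: hpsd.
Qed.

Lemma hermitian_idempotent_diag_le1 n (P : 'M[C]_n) :
  adj_mx P = P -> P *m P = P -> forall k, P k k <= 1.
Proof.
move=> hPa hP2 k.
have hPkk : P k k = \sum_j `|P k j| ^+ 2.
  rewrite -{1}hP2 mxE; apply: eq_bigr => j _; rewrite normCK; congr (_ * _).
  by rewrite -{1}hPa !mxE.
have hPkk0 : 0 <= P k k by rewrite hPkk; apply: sumr_ge0 => j _; rewrite exprn_ge0.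
have hPkk2 : P k k * P k k <= P k k * 1.
  rewrite mulr1 {3}hPkk (bigD1 k) //= -expr2 -{1}(ger0_norm hPkk0) lerDl.
  by apply: sumr_ge0 => j _; rewrite exprn_ge0.
have [->|hnz] := eqVneq (P k k) 0; first exact: ler01.
have hpos : 0 < P k k by rewrite lt_def hnz hPkk0.
by rewrite -(ler_pM2l hpos).
Qed.

End Adjoint.

Section OrthogonalRows.
Variables (C : numClosedFieldType) (k N : nat) (T : 'M[C]_(k, N)) (nu : 'rV[C]_k).
Hypothesis hT : T *m adj_mx T = diag_mx nu.

Definition row_sqnorm_ratio i j := `|T i j| ^+ 2 / nu 0 i.

Lemma sum_sqnorm_row i : \sum_j `|T i j| ^+ 2 = nu 0 i.
Proof.
have := congr1 (fun M : 'M[C]_k => M i i) hT.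
rewrite /= !mxE eqxx mulr1n => <-.
by apply: eq_bigr => j _; rewrite normCK !mxE.
Qed.

Lemma gram_diag_ge0 i : 0 <= nu 0 i.
Proof. by rewrite -sum_sqnorm_row; apply: sumr_ge0 => j _; rewrite exprn_ge0. Qed.

Lemma mul_row_sqnorm_ratio i j : nu 0 i * row_sqnorm_ratio i j = `|T i j| ^+ 2.
Proof.
rewrite /row_sqnorm_ratio; have [nu0|nu_neq0] := eqVneq (nu 0 i) 0.
  have := sum_sqnorm_row i; rewrite nu0 => /psumr_eq0P -> //.
    by rewrite mul0r.
  by move=> l _; rewrite exprn_ge0.
by rewrite mulrCA mulfV // mulr1.
Qed.

(* The column sums are diagonal entries of the orthogonal projection
   [T^H diag(nu)^+ T] onto the row space of [T] (Bessel's inequality). *)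
Lemma row_sqnorm_ratio_substochastic : doubly_substochastic row_sqnorm_ratio.
Proof.
have ratio_ge0 i j : 0 <= row_sqnorm_ratio i j.
  by rewrite mulr_ge0 ?exprn_ge0 // invr_ge0 gram_diag_ge0.
split=> // [i|j].
  rewrite -mulr_suml sum_sqnorm_row; have [->|nu_neq0] := eqVneq (nu 0 i) 0.
    by rewrite mul0r ler01.
  by rewrite mulfV.
pose Dinv := diag_mx (\row_i (nu 0 i)^-1).
pose P := adj_mx T *m Dinv *m T.
have hPjj : P j j = \sum_i row_sqnorm_ratio i j.
  rewrite /P mxE; apply: eq_bigr => i _.
  by rewrite mul_mx_diag !mxE /row_sqnorm_ratio normCK; ring.
have hD : Dinv *m diag_mx nu *m Dinv = Dinv.
  rewrite !mulmx_diag; congr diag_mx; apply/rowP => i; rewrite !mxE.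
  have [->|nu_neq0] := eqVneq (nu 0 i) 0; first by rewrite invr0 !mul0r.
  by rewrite mulVf // mul1r.
have hDadj : adj_mx Dinv = Dinv.
  apply/matrixP => i l; rewrite !mxE; have [->|_] := eqVneq i l.
    by rewrite !mulr1n; apply/CrealP; rewrite realV ger0_real ?gram_diag_ge0.
  by rewrite !mulr0n conjC0.
rewrite -hPjj; apply: hermitian_idempotent_diag_le1.
  by rewrite /P !adj_mxM adj_mxK hDadj mulmxA.
have -> : P *m P = adj_mx T *m (Dinv *m (T *m adj_mx T) *m Dinv) *m T.
  by rewrite /P !mulmxA.
by rewrite hT hD.
Qed.

End OrthogonalRows.

Section TraceInequality.
Variable C : numClosedFieldType.

Lemma mxtrace_diag_conj m n (T : 'M[C]_(m, n)) (d : 'rV[C]_n) :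
  \tr (T *m diag_mx d *m adj_mx T) = \sum_i \sum_k `|T i k| ^+ 2 * d 0 k.
Proof.
apply: eq_bigr => i _; rewrite mxE; apply: eq_bigr => k _.
by rewrite mul_mx_diag !mxE normCK; ring.
Qed.

Lemma mxtrace_conj_le_sdot k N (W : 'M[C]_(k, N)) (rho : 'M[C]_N) (s t : seq C) :
  adj_mx rho = rho -> (forall v, 0 <= braket v rho v) ->
  char_poly rho = \prod_(x <- s) ('X - x%:P) ->
  char_poly (W *m adj_mx W) = \prod_(x <- t) ('X - x%:P) ->
  \tr (W *m rho *m adj_mx W) <= sdot (decr s) (decr t).
Proof.
move=> hH hpsd hs ht; set K := W *m adj_mx W.
have hKH : adj_mx K = K by rewrite adj_mxM adj_mxK.
set X := spectralmx K; set nu := spectral_diag K.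
set V := spectralmx rho; set d := spectral_diag rho.
have hX : X \is unitarymx := spectral_unitarymx K.
have hV : V \is unitarymx := spectral_unitarymx rho.
have decK : K = adj_mx X *m diag_mx nu *m X.
  by apply: normal_spectral_decomp; rewrite hKH.
have decR : rho = adj_mx V *m diag_mx d *m V.
  by apply: normal_spectral_decomp; rewrite hH.
set T := X *m W *m adj_mx V.
have hT : T *m adj_mx T = diag_mx nu.
  rewrite /T !adj_mxM adj_mxK !mulmxA -[_ *m adj_mx V *m V]mulmxA.
  rewrite unitary_adj_mulmx // mulmx1 -[X *m W *m adj_mx W]mulmxA -/K decK.
  rewrite !mulmxA unitary_mulmx_adj // mul1mx -mulmxA unitary_mulmx_adj //.
  by rewrite mulmx1.
have -> : \tr (W *m rho *m adj_mx W) = \tr (T *m diag_mx d *m adj_mx T).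
  have -> : T *m diag_mx d *m adj_mx T = X *m (W *m rho *m adj_mx W) *m adj_mx X.
    by rewrite /T decR !adj_mxM adj_mxK !mulmxA.
  by rewrite [RHS]mxtrace_mulC !mulmxA unitary_adj_mulmx // mul1mx.
rewrite mxtrace_diag_conj sdotC.
under eq_bigr do under eq_bigr do rewrite -(mul_row_sqnorm_ratio hT).
apply: doubly_substochastic_le_sdot.
- exact: gram_diag_ge0 hT.
- exact: hermitian_psd_spectral_diag_ge0.
- exact: row_sqnorm_ratio_substochastic.
- by apply: perm_eq_spectral_diag; rewrite ?hKH.
- by apply: perm_eq_spectral_diag; rewrite ?hH.
Qed.

End TraceInequality.

Section BlockGram.
Variable C : numClosedFieldType.

Lemma comp_char_poly n (M : 'M[C]_n) (q : {poly C}) :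
  char_poly M \Po q = \det (q%:M - map_mx polyC M).
Proof.
rewrite /char_poly -det_map_mx; congr (\det _); apply/matrixP => i j.
by rewrite !mxE rmorphB /= rmorphMn /= comp_polyX comp_polyC.
Qed.

Lemma det_block_schur m n (A : 'M[C]_(n, m)) (y : {poly C}) :
  \det (block_mx y%:M (- map_mx polyC (adj_mx A)) (- map_mx polyC A) y%:M)
     * y ^+ (m + n)
  = \det ((y * y)%:M - map_mx polyC (adj_mx A *m A)) * (y * y) ^+ n.
Proof.
set B := map_mx polyC (adj_mx A); set A' := map_mx polyC A.
have e : block_mx y%:M B 0 y%:M *m block_mx y%:M (- B) (- A') y%:M =
    block_mx ((y * y)%:M - B *m A') 0 (- (y *: A')) (y * y)%:M.
  rewrite mulmx_block !mul0mx !add0r !mulmxN !mul_scalar_mx mul_mx_scalar.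
  by rewrite !scale_scalar_mx addNr.
have := congr1 determinant e.
rewrite det_mulmx det_ublock det_lblock !det_scalar => h.
by rewrite map_mxM -/B -/A' -h exprD; ring.
Qed.

(* By the Schur complement, the characteristic polynomial at x is
   det((x - 1)^2 - A^H A) up to powers of x - 1, and each factor
   (x - 1)^2 - sig k ^ 2 splits as (x - 1 - sig k) (x - 1 + sig k). *)
Lemma char_poly_block_adj m n (A : 'M[C]_(n, m)) (sig : 'I_(minn m n) -> C) :
  char_poly (adj_mx A *m A) =
    'X^(m - minn m n) * \prod_(k < minn m n) ('X - (sig k ^+ 2)%:P) ->
  char_poly (block_mx 1%:M (adj_mx A) A 1%:M) =
  \prod_(x <- [seq 1 + sig k | k <- enum 'I_(minn m n)] ++
    [seq 1 - sig k | k <- enum 'I_(minn m n)] ++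
    nseq (m + n - (minn m n + minn m n)) 1) ('X - x%:P).
Proof.
move=> hs; set y : {poly C} := 'X - 1.
have hy : y != 0 by rewrite /y -polyC1 -size_poly_gt0 size_XsubC.
rewrite !big_cat /= !big_map -!enumT !big_enum /= big_nseq iter_mulr mulr1 polyC1 -/y.
apply: (mulIf (expf_neq0 (m + n) hy)); rewrite /char_poly.
have -> : char_poly_mx (block_mx 1%:M (adj_mx A) A 1%:M) =
    block_mx y%:M (- map_mx polyC (adj_mx A)) (- map_mx polyC A) y%:M.
  rewrite /char_poly_mx map_block_mx (scalar_mx_block m n) opp_block_mx add_block_mx.
  by rewrite !sub0r !map_mx1 !(raddfB (@scalar_mx _ _)).
rewrite det_block_schur -comp_char_poly hs rmorphM /= rmorphXn /= comp_polyX.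
rewrite rmorph_prod /= mulrA -big_split /=.
have -> : \prod_(i < minn m n) (('X - (sig i ^+ 2)%:P) \Po (y * y)) =
    \prod_(i < minn m n) (('X - (1 + sig i)%:P) * ('X - (1 - sig i)%:P)).
  apply: eq_bigr => i _; rewrite rmorphB /= comp_polyX comp_polyC /y.
  by rewrite polyCD polyCB polyC1 rmorphXn /=; ring.
set P := \prod_(i < minn m n) _.
rewrite !exprMn -!exprD [_ * P]mulrC -mulrA -exprD -mulrA -exprD.
congr (_ * y ^+ _).
have := geq_minl m n; have := geq_minr m n; lia.
Qed.

End BlockGram.

Section Bras.
Variables (C : numClosedFieldType) (k N : nat) (hk : (k <= N)%N).

Definition bras (X : 'M[C]_N) : 'M[C]_(k, N) :=
  \matrix_(i, l) (X (widen_ord hk i) l)^*.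

Lemma sum_braket_bras (X rho : 'M[C]_N) :
  \sum_(j < N | (j < k)%N) braket (row j X) rho (row j X) =
  \tr (bras X *m rho *m adj_mx (bras X)).
Proof.
rewrite (big_ord_narrow hk); apply: eq_bigr => i _.
rewrite /braket !mxE; apply: eq_bigr => j _; rewrite !mxE conjCK.
by congr (_ * _); apply: eq_bigr => l _; rewrite !mxE.
Qed.

Lemma bras_orthonormal (X : 'M[C]_N) :
  orthonormal_basis X -> bras X *m adj_mx (bras X) = 1%:M.
Proof.
move=> hX; apply/matrixP => i j.
have := congr1 (fun M : 'M[C]_N => (M (widen_ord hk i) (widen_ord hk j))^*) hX.
rewrite /= !mxE rmorph_sum /= conjC_nat => h.
rewrite (_ : (i == j) = (widen_ord hk i == widen_ord hk j)) // -h.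
by apply: eq_bigr => l _; rewrite !mxE rmorphM /= conjCK mulrC.
Qed.

End Bras.

Theorem lemma1 (C : numClosedFieldType) (N : nat) (rho : 'M[C]_N)
  (lam : 'I_N -> C) (E Ab : 'M[C]_N) (m n : nat)
  (hrho : density_matrix rho) (hlam : eigenvalue_vector rho lam)
  (hE : orthonormal_basis E) (hAb : orthonormal_basis Ab)
  (hm1 : (1 <= m)%N) (hmN : (m <= N)%N) (hn1 : (1 <= n)%N) (hnN : (n <= N)%N)
  (sig : 'I_(minn m n) -> C) :
  let p := fun j : 'I_N => braket (row j E) rho (row j E) in
  let q := fun i : 'I_N => braket (row i Ab) rho (row i Ab) in
  let A : 'M[C]_(n, m) :=
    \matrix_(i < n, j < m) ip (row (widen_ord hnN i) Ab) (row (widen_ord hmN j) E) in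
  singular_values A sig ->
  let mu : seq C :=
    [seq 1 + sig k | k <- enum 'I_(minn m n)] ++
    [seq 1 - sig k | k <- enum 'I_(minn m n)] ++
    nseq (m + n - (minn m n + minn m n)) 1 in
  \sum_(j < N | (j < m)%N) p j + \sum_(i < N | (i < n)%N) q i
    <= sdot (decr [seq lam i | i <- enum 'I_N]) (decr mu).
Proof.
move=> p q A [_ hsig]; cbv zeta; case: hrho => hH hpsd _.
set F := bras hmN E; set G := bras hnN Ab; set W := col_mx F G.
have hA : A = G *m adj_mx F.
  apply/matrixP => i j; rewrite /A /ip !mxE; apply: eq_bigr => l _.
  by rewrite !mxE conjCK.
have hWW : W *m adj_mx W = block_mx 1%:M (adj_mx A) A 1%:M.
  rewrite /W [X in _ *m X = _]/adj_mx map_col_mx tr_col_mx mul_col_row -!/(adj_mx _).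
  by rewrite !bras_orthonormal // hA adj_mxM adj_mxK.
have -> : \sum_(j < N | (j < m)%N) p j + \sum_(i < N | (i < n)%N) q i =
    \tr (W *m rho *m adj_mx W).
  rewrite /p /q !sum_braket_bras -/F -/G /W {3}/adj_mx map_col_mx tr_col_mx.
  by rewrite mul_col_mx mul_col_row mxtrace_block.
apply: mxtrace_conj_le_sdot => //; first by rewrite hlam big_map big_enum.
by rewrite hWW; exact: char_poly_block_adj hsig.
Qed.
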